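(* Let $d\ge2$, let $g=\sum_{\mathbf k}g_{\mathbf k}u^{\mathbf k}\in R_d$ satisfy conditions (A)–(D) below, and let $s\ge d-2$ be an integer. Define $\omega\in\mathbb R^{\mathbb Z^d}$ by $\omega_{\mathbf 0}=0$ and $\omega_{\mathbf n}=\|\mathbf n\|^{-s}$ for $\mathbf n\ne\mathbf 0$, where $\|\cdot\|$ is the Euclidean norm. Then $g\cdot\omega\in\ell^1(\mathbb Z^d)$, where $(g\cdot\omega)_{\mathbf n}=\sum_{\mathbf k}g_{\mathbf k}\omega_{\mathbf n-\mathbf k}$. Conditions: (A) $\sum_{\mathbf k}g_{\mathbf k}=0$; (B) $\sum_{\mathbf k}g_{\mathbf k}k_i=0$ for all $i$; (C) $\sum_{\mathbf k}g_{\mathbf k}k_ik_j=0$ for all $i\ne j$; (D) $\sum_{\mathbf k}g_{\mathbf k}(k_i^2-k_j^2)=0$ for all $i\ne j$.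
   Context: $R_d=\mathbb Z[u_1^{\pm1},\dots,u_d^{\pm1}]$ with $u^{\mathbf k}=u_1^{k_1}\cdots u_d^{k_d}$; Laurent polynomials are identified with their finitely supported coefficient sequences on $\mathbb Z^d$. *)

From Stdlib Require Import Reals ZArith List.
Import ListNotations.

(* A point of Z^d is a list of d integers. *)
Definition pt := list Z.

Definition coord (k : pt) (i : nat) : Z := nth i k 0%Z.

Definition vsub (n k : pt) : pt :=
  map (fun p => (fst p - snd p)%Z) (combine n k).

Definition normsq (n : pt) : R :=
  fold_right (fun x acc => (IZR x * IZR x + acc)%R) 0%R n.
Definition eucl_norm (n : pt) : R := sqrt (normsq n).

Definition is_zero_pt (n : pt) : bool := forallb (fun x => Z.eqb x 0) n.

Definition omega (s : Z) (n : pt) : R :=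
  if is_zero_pt n then 0%R else powerRZ (eucl_norm n) (- s).

(* A Laurent polynomial in R_d is a coefficient function g : Z^d -> Z
   with finite support; S is a duplicate-free list of points of Z^d
   containing the support of g. *)
Definition is_support (d : nat) (g : pt -> Z) (S : list pt) : Prop :=
  NoDup S /\ Forall (fun k => length k = d) S /\
  (forall k, g k <> 0%Z -> In k S).

Definition zsumS (S : list pt) (f : pt -> Z) : Z :=
  fold_right (fun k acc => (f k + acc)%Z) 0%Z S.

Definition condA (g : pt -> Z) (S : list pt) : Prop := zsumS S g = 0%Z.
Definition condB (d : nat) (g : pt -> Z) (S : list pt) : Prop :=
  forall i, (i < d)%nat -> zsumS S (fun k => g k * coord k i)%Z = 0%Z.
Definition condC (d : nat) (g : pt -> Z) (S : list pt) : Prop :=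
  forall i j, (i < d)%nat -> (j < d)%nat -> i <> j ->
    zsumS S (fun k => g k * coord k i * coord k j)%Z = 0%Z.
Definition condD (d : nat) (g : pt -> Z) (S : list pt) : Prop :=
  forall i j, (i < d)%nat -> (j < d)%nat -> i <> j ->
    zsumS S (fun k => g k * (coord k i ^ 2 - coord k j ^ 2))%Z = 0%Z.

Definition conv (g : pt -> Z) (S : list pt) (s : Z) (n : pt) : R :=
  fold_right (fun k acc => (IZR (g k) * omega s (vsub n k) + acc)%R) 0%R S.

Definition ell1 (d : nat) (f : pt -> R) : Prop :=
  exists M : R, forall L : list pt,
    NoDup L -> Forall (fun n => length n = d) L ->
    (fold_right (fun n acc => Rabs (f n) + acc) 0 L <= M)%R.

(* Write r = |n|^2 and |n - k|^2 = r (1 + t_k) with t_k = (|k|^2 - 2 n.k) / r.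
   For |n| large, omega_(n-k) = |n|^(-s) (1 + t_k)^al with al = -s/2, and the
   Taylor expansion (1 + t)^al = 1 + al t + be t^2 + O(t^3), be = al(al-1)/2,
   summed against g gives: the order-0 and order-1 moments vanish by (A), (B);
   by (C), (D) the second-moment matrix of g is a scalar mom2 * I, so the
   quadratic terms contribute (al d + 4 be) mom2 / r = (s/2)(s + 2 - d) mom2 / r,
   which vanishes for s = d - 2 and is O(|n|^(-(s+2))) = O(|n|^(-(d+1)))
   otherwise; everything else is O(|n|^(-(s+3))).  Hence
   |(g . omega)_n| = O((1 + |n|_1)^(-(d+1))), and summing this bound over
   boxes of Z^d one coordinate at a time gives a bound 3^d. *)
From Stdlib Require Import Reals Lra Lia Psatz ZArith List.
Import ListNotations.
Open Scope R_scope.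

Definition rsum {A : Type} (L : list A) (f : A -> R) : R :=
  fold_right (fun k acc => f k + acc) 0 L.

Lemma rsum_plus {A} (l : list A) f h : rsum l (fun x => f x + h x) = rsum l f + rsum l h.
Proof. induction l; simpl; [ring | rewrite IHl; ring]. Qed.

Lemma rsum_scal {A} (l : list A) f a : rsum l (fun x => a * f x) = a * rsum l f.
Proof. induction l; simpl; [ring | rewrite IHl; ring]. Qed.

Lemma rsum_ext {A} (l : list A) f h : (forall x, In x l -> f x = h x) -> rsum l f = rsum l h.
Proof. induction l; simpl; intros H; [easy | rewrite H, IHl; auto]. Qed.

Lemma rsum_le {A} (l : list A) f h : (forall x, In x l -> f x <= h x) -> rsum l f <= rsum l h.
Proof.
  induction l; simpl; intros H; [lra |].
  apply Rplus_le_compat; [apply H | apply IHl; intros; apply H]; auto.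
Qed.

Lemma rsum_nonneg {A} (l : list A) f : (forall x, In x l -> 0 <= f x) -> 0 <= rsum l f.
Proof.
  induction l; simpl; intros H; [lra |].
  apply Rplus_le_le_0_compat; [apply H | apply IHl; intros; apply H]; auto.
Qed.

Lemma rsum_abs {A} (l : list A) f : Rabs (rsum l f) <= rsum l (fun x => Rabs (f x)).
Proof.
  induction l; simpl; [rewrite Rabs_R0; lra |].
  eapply Rle_trans; [apply Rabs_triang | lra].
Qed.

Lemma rsum_in_le {A} (l : list A) f x :
  (forall y, In y l -> 0 <= f y) -> In x l -> f x <= rsum l f.
Proof.
  induction l; simpl; intros H Hx; [contradiction |].
  destruct Hx as [-> | Hx].
  - assert (0 <= rsum l f) by (apply rsum_nonneg; auto). lra.
  - assert (f x <= rsum l f) by (apply IHl; auto). assert (0 <= f a) by auto. lra.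
Qed.

Lemma rsum_app {A} (l1 l2 : list A) f : rsum (l1 ++ l2) f = rsum l1 f + rsum l2 f.
Proof. induction l1; simpl; [ring | rewrite IHl1; ring]. Qed.

Lemma rsum_map {A B} (h : A -> B) l f : rsum (map h l) f = rsum l (fun x => f (h x)).
Proof. induction l; simpl; [ring | rewrite IHl; ring]. Qed.

Lemma rsum_flat_map {A B} (h : A -> list B) l f :
  rsum (flat_map h l) f = rsum l (fun x => rsum (h x) f).
Proof. induction l; simpl; [ring | rewrite rsum_app, IHl; ring]. Qed.

Lemma rsum_sub {A} (L B : list A) f :
  NoDup L -> (forall x, In x L -> In x B) -> (forall x, 0 <= f x) ->
  rsum L f <= rsum B f.
Proof.
  revert B. induction L as [|a L IH]; intros B HN Hin Hf.
  - apply rsum_nonneg; auto.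
  - inversion HN as [|? ? HaL HL]; subst.
    destruct (in_split a B (Hin a (or_introl eq_refl))) as [B1 [B2 ->]].
    assert (Hrest : rsum L f <= rsum (B1 ++ B2) f).
    { apply IH; auto. intros x Hx.
      assert (Hx' := Hin x (or_intror Hx)).
      apply in_app_or in Hx'. apply in_or_app.
      destruct Hx' as [H | [-> | H]]; auto; contradiction. }
    rewrite rsum_app in *. simpl. lra.
Qed.

Fixpoint nsum (d : nat) (f : nat -> R) : R :=
  match d with
  | O => 0
  | S d' => f O + nsum d' (fun i => f (S i))
  end.

Lemma nsum_ext d : forall f h, (forall i, (i < d)%nat -> f i = h i) -> nsum d f = nsum d h.
Proof.
  induction d; intros f h H; simpl; auto.
  rewrite H by lia. f_equal. apply IHd. intros; apply H; lia.
Qed.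

Lemma nsum_plus d : forall f h, nsum d (fun i => f i + h i) = nsum d f + nsum d h.
Proof. induction d; intros; simpl; [ring | rewrite IHd; ring]. Qed.

Lemma nsum_scal d : forall f a, nsum d (fun i => a * f i) = a * nsum d f.
Proof. induction d; intros; simpl; [ring | rewrite IHd; ring]. Qed.

Lemma nsum_const d c : nsum d (fun _ => c) = INR d * c.
Proof. induction d; simpl nsum; [simpl; ring | rewrite IHd, S_INR; ring]. Qed.

Lemma nsum_delta d : forall i f, (i < d)%nat ->
  nsum d (fun j => if Nat.eqb i j then f j else 0) = f i.
Proof.
  induction d; intros i f Hi; [lia |]. simpl.
  destruct i as [|i]; simpl.
  - rewrite nsum_const. ring.
  - rewrite (IHd i (fun j => f (S j))) by lia. ring.
Qed.

Lemma nsum_le d : forall f h, (forall i, (i < d)%nat -> f i <= h i) -> nsum d f <= nsum d h.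
Proof.
  induction d; intros f h H; simpl; [lra |].
  apply Rplus_le_compat; [apply H; lia | apply IHd; intros; apply H; lia].
Qed.

Lemma nsum_nonneg d f : (forall i, (i < d)%nat -> 0 <= f i) -> 0 <= nsum d f.
Proof. intros H. rewrite <- (Rmult_0_r (INR d)), <- nsum_const. now apply nsum_le. Qed.

Lemma nsum_abs d : forall f, Rabs (nsum d f) <= nsum d (fun i => Rabs (f i)).
Proof.
  induction d; intros; simpl; [rewrite Rabs_R0; lra |].
  eapply Rle_trans; [apply Rabs_triang |]. specialize (IHd (fun i => f (S i))). lra.
Qed.

Lemma nsum_mul d f h : nsum d f * nsum d h = nsum d (fun i => nsum d (fun j => f i * h j)).
Proof.
  rewrite Rmult_comm, <- (nsum_scal d f (nsum d h)). apply nsum_ext. intros i _.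
  rewrite Rmult_comm, <- (nsum_scal d h (f i)). apply nsum_ext. intros; ring.
Qed.

Lemma rsum_nsum {A} (l : list A) d F :
  rsum l (fun k => nsum d (F k)) = nsum d (fun i => rsum l (fun k => F k i)).
Proof.
  revert F; induction d; intros F; simpl.
  - induction l; simpl; [ring | rewrite IHl; ring].
  - rewrite rsum_plus. f_equal. apply (IHd (fun k i => F k (S i))).
Qed.

Lemma IZR_zsumS S f : IZR (zsumS S f) = rsum S (fun k => IZR (f k)).
Proof. induction S; simpl; [auto | rewrite plus_IZR, IHS; reflexivity]. Qed.

Lemma normsq_nsum n : normsq n = nsum (length n) (fun i => IZR (coord n i) * IZR (coord n i)).
Proof. induction n; simpl; [auto | rewrite IHn; reflexivity]. Qed.

Lemma normsq_nonneg n : 0 <= normsq n.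
Proof. rewrite normsq_nsum. apply nsum_nonneg. intros; nra. Qed.

Lemma normsq_zero v : is_zero_pt v = true -> normsq v = 0.
Proof.
  induction v; simpl; auto. intro H. apply andb_prop in H as [H1 H2].
  apply Z.eqb_eq in H1; subst. rewrite IHv by auto. simpl; ring.
Qed.

Lemma normsq_ge1 v : is_zero_pt v = false -> 1 <= normsq v.
Proof.
  induction v; simpl; [discriminate |]. intro H.
  pose proof (normsq_nonneg v).
  destruct (Z.eqb a 0) eqn:E.
  - simpl in H. specialize (IHv H). nra.
  - apply Z.eqb_neq in E.
    destruct (Z_lt_le_dec a 0).
    + assert (IZR a <= -1) by (apply IZR_le; lia). nra.
    + assert (1 <= IZR a) by (apply IZR_le; lia). nra.
Qed.

Lemma coord_sq_le n : forall i, IZR (coord n i) * IZR (coord n i) <= normsq n.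
Proof.
  induction n as [|x n IH]; intros i; unfold coord; simpl.
  - destruct i; simpl; lra.
  - pose proof (normsq_nonneg n). destruct i; simpl; [nra |].
    specialize (IH i). unfold coord in IH. nra.
Qed.

Lemma coord_le_norm n i : Rabs (IZR (coord n i)) <= sqrt (normsq n).
Proof.
  rewrite <- sqrt_Rsqr_abs. apply sqrt_le_1_alt. apply coord_sq_le.
Qed.

Lemma coord_vsub n k i : length n = length k ->
  coord (vsub n k) i = (coord n i - coord k i)%Z.
Proof.
  revert k i; induction n as [|x n IH]; intros [|y k] i H; simpl in H; try lia.
  - unfold coord; simpl. destruct i; reflexivity.
  - destruct i; [reflexivity |]. unfold coord, vsub in *. simpl. apply IH. lia.
Qed.

Lemma length_vsub n k : length n = length k -> length (vsub n k) = length n.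
Proof. intro H. unfold vsub. rewrite length_map, length_combine. lia. Qed.

Definition n1 (n : pt) : R := fold_right (fun x acc => Rabs (IZR x) + acc) 0 n.

Lemma n1_nsum n : n1 n = nsum (length n) (fun i => Rabs (IZR (coord n i))).
Proof. induction n; simpl; [auto | rewrite IHn; reflexivity]. Qed.

Lemma n1_nonneg n : 0 <= n1 n.
Proof. induction n; simpl; [lra |]. pose proof (Rabs_pos (IZR a)); lra. Qed.

Lemma n1_le_norm d n : length n = d -> n1 n <= INR d * sqrt (normsq n).
Proof.
  intro Hn. rewrite n1_nsum, Hn, <- nsum_const. apply nsum_le. intros; apply coord_le_norm.
Qed.

Definition dot (d : nat) (n k : pt) : R :=
  nsum d (fun i => IZR (coord n i) * IZR (coord k i)).

Lemma dot_le d n k : length k = d -> Rabs (dot d n k) <= sqrt (normsq n) * n1 k.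
Proof.
  intro Hk. unfold dot. rewrite n1_nsum, Hk, <- nsum_scal.
  eapply Rle_trans; [apply nsum_abs |]. apply nsum_le. intros i _.
  rewrite Rabs_mult. apply Rmult_le_compat_r; [apply Rabs_pos | apply coord_le_norm].
Qed.

Lemma normsq_vsub d n k : length n = d -> length k = d ->
  normsq (vsub n k) = normsq n + (-2 * dot d n k + normsq k).
Proof.
  intros Hn Hk.
  rewrite (normsq_nsum (vsub n k)), length_vsub, Hn by lia.
  rewrite (normsq_nsum n), (normsq_nsum k), Hn, Hk. unfold dot.
  rewrite <- nsum_scal, <- !nsum_plus. apply nsum_ext. intros i _.
  rewrite coord_vsub by lia. rewrite minus_IZR. ring.
Qed.

(* The moment conditions (A)-(D) say that the moments of g of order 0 and 1
   vanish and that its second-moment matrix is a scalar multiple mom2 of the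
   identity; consequently the moments of the quadratic forms occurring in
   |n - k|^2 are explicit. *)
Section Moments.

Variables (d : nat) (g : pt -> Z) (supp : list pt).
Hypothesis Hd : (1 <= d)%nat.
Hypothesis Hlen : Forall (fun k => length k = d) supp.

(* The common diagonal entry of the second-moment matrix. *)
Definition mom2 : R := rsum supp (fun k => IZR (g k) * IZR (coord k 0) * IZR (coord k 0)).

Lemma moment0 : condA g supp -> rsum supp (fun k => IZR (g k)) = 0.
Proof. intro HA. rewrite <- IZR_zsumS, HA. reflexivity. Qed.

Lemma moment1 n : condB d g supp -> rsum supp (fun k => IZR (g k) * dot d n k) = 0.
Proof.
  intro HB. unfold dot.
  rewrite (rsum_ext _ _ (fun k => nsum d (fun i => IZR (coord n i) * (IZR (g k) * IZR (coord k i))))).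
  2:{ intros k _. rewrite <- nsum_scal. apply nsum_ext; intros; ring. }
  rewrite rsum_nsum, <- (Rmult_0_r (INR d)), <- nsum_const.
  apply nsum_ext. intros i Hi. rewrite rsum_scal.
  rewrite (rsum_ext _ _ (fun k => IZR (g k * coord k i))) by (intros; symmetry; apply mult_IZR).
  rewrite <- IZR_zsumS, HB by exact Hi. ring.
Qed.

Lemma moment2_scalar i j : condC d g supp -> condD d g supp -> (i < d)%nat -> (j < d)%nat ->
  rsum supp (fun k => IZR (g k) * IZR (coord k i) * IZR (coord k j)) =
  if Nat.eqb i j then mom2 else 0.
Proof.
  intros HC HD Hi Hj. destruct (Nat.eqb i j) eqn:E.
  - apply Nat.eqb_eq in E; subst j.
    destruct (Nat.eq_dec i 0) as [-> | Hi0]; [reflexivity |].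
    assert (H := f_equal IZR (HD i 0%nat Hi Hd Hi0)). rewrite IZR_zsumS in H.
    rewrite (rsum_ext _ _ (fun k => IZR (g k) * IZR (coord k i) * IZR (coord k i) +
                -1 * (IZR (g k) * IZR (coord k 0) * IZR (coord k 0)))) in H.
    2:{ intros k _. rewrite mult_IZR, minus_IZR, !Z.pow_2_r, !mult_IZR. ring. }
    rewrite rsum_plus, rsum_scal in H. unfold mom2. lra.
  - apply Nat.eqb_neq in E.
    assert (H := f_equal IZR (HC i j Hi Hj E)). rewrite IZR_zsumS in H.
    rewrite <- H. apply rsum_ext; intros; rewrite !mult_IZR; reflexivity.
Qed.

Lemma moment_normsq : condC d g supp -> condD d g supp ->
  rsum supp (fun k => IZR (g k) * normsq k) = INR d * mom2.
Proof.
  intros HC HD. rewrite Forall_forall in Hlen.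
  rewrite (rsum_ext _ _ (fun k => nsum d (fun i => IZR (g k) * IZR (coord k i) * IZR (coord k i)))).
  2:{ intros k Hk. rewrite normsq_nsum, (Hlen k Hk), <- nsum_scal.
      apply nsum_ext; intros; ring. }
  rewrite rsum_nsum, <- nsum_const. apply nsum_ext. intros i Hi.
  rewrite moment2_scalar, Nat.eqb_refl; auto.
Qed.

Lemma moment_dot2 n : condC d g supp -> condD d g supp -> length n = d ->
  rsum supp (fun k => IZR (g k) * (dot d n k * dot d n k)) = mom2 * normsq n.
Proof.
  intros HC HD Hn. unfold dot.
  rewrite (rsum_ext _ _ (fun k => nsum d (fun i => nsum d (fun j =>
      IZR (coord n i) * IZR (coord n j) * (IZR (g k) * IZR (coord k i) * IZR (coord k j)))))).
  2:{ intros k _. rewrite nsum_mul, <- nsum_scal. apply nsum_ext; intros i _.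
      rewrite <- nsum_scal. apply nsum_ext; intros; ring. }
  rewrite rsum_nsum, normsq_nsum, Hn, <- nsum_scal.
  apply nsum_ext; intros i Hi. rewrite rsum_nsum.
  rewrite (nsum_ext d _ (fun j => if Nat.eqb i j then IZR (coord n i) * IZR (coord n j) * mom2 else 0)).
  - rewrite nsum_delta by auto. ring.
  - intros j Hj. rewrite rsum_scal, moment2_scalar by auto. destruct (Nat.eqb i j); ring.
Qed.

End Moments.

Definition P (e t : R) : R := Rpower (1 + t) e.

Lemma P_at_0 e : P e 0 = 1.
Proof. unfold P, Rpower. rewrite Rplus_0_r, ln_1, Rmult_0_r. apply exp_0. Qed.

Lemma P_derivable e t : -1 < t -> derivable_pt_lim (P e) t (e * P (e - 1) t).
Proof.
  intro Ht.
  assert (Hshift : derivable_pt_lim (fun t => 1 + t) t 1).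
  { apply (derivable_pt_lim_ext (fct_cte 1 + id)%F); [intro; reflexivity |].
    replace 1 with (0 + 1) at 2 by ring.
    apply derivable_pt_lim_plus; [apply derivable_pt_lim_const | apply derivable_pt_lim_id]. }
  assert (Hcomp := derivable_pt_lim_comp _ _ _ _ _ Hshift
                     (derivable_pt_lim_power (1 + t) e ltac:(lra))).
  unfold P. replace (e * Rpower (1 + t) (e - 1)) with (e * Rpower (1 + t) (e - 1) * 1) by ring.
  exact Hcomp.
Qed.

Lemma derivable_plus_quadratic f f' x a b c e :
  derivable_pt_lim f x f' -> forall l, l = a * f' + c + e * (2 * x) ->
  derivable_pt_lim (fun t => a * f t + b + c * t + e * (t * t)) x l.
Proof.
  intros H l ->.
  apply (derivable_pt_lim_ext
     (mult_real_fct a f + fct_cte b + mult_real_fct c id + mult_real_fct e (id * id))%F).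
  { intro z; reflexivity. }
  replace (a * f' + c + e * (2 * x)) with
    (a * f' + 0 + c * 1 + e * (1 * id x + id x * 1)) by (unfold id; ring).
  repeat apply derivable_pt_lim_plus;
    try apply derivable_pt_lim_scal; try apply derivable_pt_lim_mult;
    try apply derivable_pt_lim_id; try apply derivable_pt_lim_const; exact H.
Qed.

Lemma Rabs_between_0 t c : Rmin 0 t <= c <= Rmax 0 t -> Rabs c <= Rabs t.
Proof. unfold Rmin, Rmax, Rabs. repeat destruct Rle_dec; repeat destruct Rcase_abs; lra. Qed.

Lemma mvt_bootstrap (h h' : R -> R) (K : R) (m : nat) :
  0 <= K ->
  (forall t, Rabs t <= 1/2 -> derivable_pt_lim h t (h' t)) -> h 0 = 0 ->
  (forall t, Rabs t <= 1/2 -> Rabs (h' t) <= K * Rabs t ^ m) ->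
  forall t, Rabs t <= 1/2 -> Rabs (h t) <= K * Rabs t ^ (S m).
Proof.
  intros HK Hd H0 Hb t Ht.
  destruct (MVT_abs h h' 0 t) as [c [Hc Hct]].
  { intros c Hc. apply Hd. pose proof (Rabs_between_0 t c Hc). lra. }
  apply Rabs_between_0 in Hct.
  rewrite H0, Rminus_0_r, Rminus_0_r in Hc. rewrite Hc. simpl.
  assert (Hc' : Rabs (h' c) <= K * Rabs t ^ m).
  { eapply Rle_trans; [apply Hb; lra |]. apply Rmult_le_compat_l; [exact HK |].
    apply pow_incr. split; [apply Rabs_pos | exact Hct]. }
  pose proof (Rabs_pos t). nra.
Qed.

Lemma P_le_neg e t : e <= 0 -> -1/2 <= t -> P e t <= Rpower (1/2) e.
Proof.
  intros He Ht. unfold P, Rpower.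
  destruct (Req_dec t (-1/2)) as [-> | Hn]; [right; do 3 f_equal; lra |].
  assert (ln (1/2) < ln (1 + t)) by (apply ln_increasing; lra).
  destruct (Req_dec e 0) as [-> | He0]; [rewrite !Rmult_0_l; lra |].
  left; apply exp_increasing. nra.
Qed.

Definition taylor_const (a : R) : R := Rabs (a * (a - 1) * (a - 2)) * Rpower (1/2) (a - 3).

Lemma taylor_const_nonneg a : 0 <= taylor_const a.
Proof.
  apply Rmult_le_pos; [apply Rabs_pos |]. unfold Rpower; left; apply exp_pos.
Qed.

(* (1 + t)^a = 1 + a t + a (a - 1)/2 t^2 + O(|t|^3) for |t| <= 1/2, a <= 0:
   three mean value steps starting from the bound on the third derivative. *)
Lemma taylor (a t : R) : a <= 0 -> Rabs t <= 1/2 ->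
  Rabs (P a t - 1 - a * t - a * (a - 1) / 2 * (t * t)) <= taylor_const a * Rabs t ^ 3.
Proof.
  intros Ha Ht.
  set (b := a * (a - 1) / 2).
  set (G2 := fun t => a * (a - 1) * P (a - 2) t + (- 2 * b) + 0 * t + 0 * (t * t)).
  set (G1 := fun t => a * P (a - 1) t + (- a) + (- 2 * b) * t + 0 * (t * t)).
  set (G0 := fun t => 1 * P a t + (-1) + (- a) * t + (- b) * (t * t)).
  assert (Hin : forall x, Rabs x <= 1/2 -> -1 < x).
  { intros x Hx. unfold Rabs in Hx. destruct Rcase_abs; lra. }
  assert (HK := taylor_const_nonneg a).
  assert (HG2 : forall x, Rabs x <= 1/2 -> Rabs (G2 x) <= taylor_const a * Rabs x ^ 1).
  { apply mvt_bootstrap with (h' := fun x => a * (a - 1) * (a - 2) * P (a - 3) x); auto.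
    - intros x Hx. eapply derivable_plus_quadratic; [apply P_derivable; auto |].
      replace (a - 2 - 1) with (a - 3) by ring. ring.
    - unfold G2. rewrite P_at_0. unfold b. field.
    - intros x Hx. simpl. rewrite Rmult_1_r, Rabs_mult. unfold taylor_const.
      apply Rmult_le_compat_l; [apply Rabs_pos |].
      unfold P. rewrite Rabs_right by (unfold Rpower; left; apply exp_pos).
      apply P_le_neg; [lra |]. pose proof (Hin x Hx). unfold Rabs in Hx.
      destruct Rcase_abs; lra. }
  assert (HG1 : forall x, Rabs x <= 1/2 -> Rabs (G1 x) <= taylor_const a * Rabs x ^ 2).
  { apply mvt_bootstrap with (h' := G2); auto.
    - intros x Hx. eapply derivable_plus_quadratic; [apply P_derivable; auto |].
      unfold G2. replace (a - 1 - 1) with (a - 2) by ring. ring.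
    - unfold G1. rewrite P_at_0. ring. }
  replace (P a t - 1 - a * t - b * (t * t)) with (G0 t) by (unfold G0; ring).
  apply mvt_bootstrap with (h' := G1); auto.
  - intros x Hx. eapply derivable_plus_quadratic; [apply P_derivable; auto |].
    unfold G1, b. ring.
  - unfold G0. rewrite P_at_0. ring.
Qed.

Lemma inv_sqrt_pow x m : 0 < x -> Rpower x (- INR m / 2) = / sqrt x ^ m.
Proof.
  intro Hx. rewrite <- Rpower_pow by (apply sqrt_lt_R0; lra).
  rewrite <- Rpower_sqrt, Rpower_mult, <- Rpower_Ropp by lra.
  f_equal. field.
Qed.

Lemma omega_rpower m v : 0 < normsq v -> omega (Z.of_nat m) v = Rpower (normsq v) (- INR m / 2).
Proof.
  intro H. unfold omega.
  destruct (is_zero_pt v) eqn:E; [rewrite normsq_zero in H by auto; lra |].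
  rewrite inv_sqrt_pow, powerRZ_neg', <- pow_powerRZ by exact H. reflexivity.
Qed.

Lemma omega_bounds m v : 0 <= omega (Z.of_nat m) v <= 1.
Proof.
  unfold omega. destruct (is_zero_pt v) eqn:E; [lra |].
  assert (H1 := normsq_ge1 v E).
  rewrite powerRZ_neg', <- pow_powerRZ. unfold eucl_norm.
  assert (1 <= sqrt (normsq v)) by (rewrite <- sqrt_1; apply sqrt_le_1_alt; lra).
  assert (1 <= sqrt (normsq v) ^ m) by (apply pow_R1_Rle; lra).
  split; [left; apply Rinv_0_lt_compat; lra |].
  rewrite <- Rinv_1. apply Rinv_le_contravar; lra.
Qed.

(* Size of a point k controlling the perturbation |n - k|^2 - |n|^2. *)
Definition ak (k : pt) : R := 2 * n1 k + normsq k.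

Lemma ak_nonneg k : 0 <= ak k.
Proof. unfold ak. pose proof (n1_nonneg k). pose proof (normsq_nonneg k). lra. Qed.

(* |n - k|^2 = |n|^2 + shift n k, and the part W n k of shift^2 that is not
   the quadratic form 4 (n.k)^2. *)
Definition shift (d : nat) (n k : pt) : R := -2 * dot d n k + normsq k.
Definition Wq (d : nat) (n k : pt) : R :=
  shift d n k * shift d n k - 4 * (dot d n k * dot d n k).

Lemma shift_bound d n k rho : length k = d -> sqrt (normsq n) <= rho -> 1 <= rho ->
  Rabs (shift d n k) <= rho * ak k.
Proof.
  intros Hk Hn Hrho. unfold shift, ak.
  pose proof (normsq_nonneg k). pose proof (n1_nonneg k).
  assert (Hdot : Rabs (dot d n k) <= rho * n1 k).
  { eapply Rle_trans; [apply dot_le, Hk |]. apply Rmult_le_compat_r; lra. }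
  eapply Rle_trans; [apply Rabs_triang |].
  rewrite Rabs_mult, (Rabs_right (normsq k)) by lra.
  replace (Rabs (-2)) with 2 by (unfold Rabs; destruct Rcase_abs; lra). nra.
Qed.

Lemma Wq_bound d n k rho : length k = d -> sqrt (normsq n) <= rho -> 1 <= rho ->
  Rabs (Wq d n k) <= rho * ak k ^ 2.
Proof.
  intros Hk Hn Hrho. unfold Wq, shift, ak.
  pose proof (normsq_nonneg k). pose proof (n1_nonneg k).
  assert (Hdot : Rabs (dot d n k) <= rho * n1 k).
  { eapply Rle_trans; [apply dot_le, Hk |]. apply Rmult_le_compat_r; lra. }
  replace ((-2 * dot d n k + normsq k) * (-2 * dot d n k + normsq k) - 4 * (dot d n k * dot d n k))
    with (-4 * dot d n k * normsq k + normsq k * normsq k) by ring.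
  eapply Rle_trans; [apply Rabs_triang |].
  rewrite !Rabs_mult, (Rabs_right (normsq k)) by lra.
  replace (Rabs (-4)) with 4 by (unfold Rabs; destruct Rcase_abs; lra).
  assert (4 * Rabs (dot d n k) * normsq k <= 4 * (rho * n1 k) * normsq k) by nra.
  assert (normsq k * normsq k <= rho * (normsq k * normsq k)) by nra.
  simpl. nra.
Qed.

Lemma inv_pow_antitone x p q : 1 <= x -> (p <= q)%nat -> / x ^ q <= / x ^ p.
Proof. intros Hx Hpq. apply Rinv_le_contravar; [apply pow_lt; lra | apply Rle_pow; auto]. Qed.

(* Combining two decaying terms into a single power of x >= 1; the first term
   either vanishes or already decays fast enough. *)
Lemma decay_combine x X Y p q e : 1 <= x -> 0 <= X -> 0 <= Y ->
  (X = 0 \/ (e <= p)%nat) -> (e <= q)%nat ->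
  X / x ^ p + Y / x ^ q <= (X + Y) / x ^ e.
Proof.
  intros Hx HX HY Hp Hq. unfold Rdiv. rewrite Rmult_plus_distr_r.
  apply Rplus_le_compat; [| apply Rmult_le_compat_l; auto using inv_pow_antitone].
  destruct Hp as [-> | Hp]; [lra |]. apply Rmult_le_compat_l; auto using inv_pow_antitone.
Qed.

Lemma inv_pow_compare C x y u e : 0 <= C -> 0 < u -> 0 < x -> u <= y * x ->
  C / x ^ e <= C * y ^ e / u ^ e.
Proof.
  intros HC Hu Hx Huyx.
  assert (Hy : 0 < y) by (destruct (Rle_lt_dec y 0); [nra | lra]).
  replace (C / x ^ e) with (C * y ^ e / (y * x) ^ e)
    by (rewrite Rpow_mult_distr; field; split; apply pow_nonzero; lra).
  unfold Rdiv. apply Rmult_le_compat_l; [apply Rmult_le_pos; [lra | apply pow_le; lra] |].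
  apply Rinv_le_contravar; [apply pow_lt; lra | apply pow_incr; lra].
Qed.

Section Decay.

Variables (d : nat) (g : pt -> Z) (supp : list pt) (m : nat).
Hypothesis Hd : (1 <= d)%nat.
Hypothesis Hlen : Forall (fun k => length k = d) supp.
Hypotheses (HA : condA g supp) (HB : condB d g supp) (HC : condC d g supp) (HD : condD d g supp).
Hypothesis Hm : (d <= m + 2)%nat.

(* Taylor coefficients of (1 + t)^al, al = -m/2. *)
Definition al : R := - INR m / 2.
Definition be : R := al * (al - 1) / 2.

(* Coefficient of 1/|n|^2 in the expansion; it vanishes for m = d - 2. *)
Definition lead : R := (al * INR d + 4 * be) * mom2 g supp.

Lemma lead_vanishes : (m + 2 = d)%nat -> lead = 0.
Proof.
  intro E. unfold lead, be, al. rewrite <- E, plus_INR. simpl. field_simplify. lra.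
Qed.

(* Beyond the radius rho0 every shift is at most half of |n|^2. *)
Definition rho0 : R := 1 + 2 * rsum supp ak.

Definition gabs (f : pt -> R) : R := rsum supp (fun k => Rabs (IZR (g k)) * f k).

Lemma gabs_nonneg f : (forall k, 0 <= f k) -> 0 <= gabs f.
Proof.
  intros H. apply rsum_nonneg. intros k _.
  apply Rmult_le_pos; [apply Rabs_pos | apply H].
Qed.

Lemma rho0_ge1 : 1 <= rho0.
Proof. unfold rho0. assert (0 <= rsum supp ak) by (apply rsum_nonneg; intros; apply ak_nonneg). lra. Qed.

Lemma ak_over_rho k rho : In k supp -> rho0 <= rho -> ak k / rho <= 1/2.
Proof.
  intros Hk Hrho. assert (ak k <= rsum supp ak) by (apply rsum_in_le; auto using ak_nonneg).
  pose proof rho0_ge1. apply Rmult_le_reg_r with rho; [lra |].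
  unfold Rdiv. rewrite Rmult_assoc, Rinv_l by lra. unfold rho0 in *. lra.
Qed.

Definition Cfar : R := Rabs lead + (Rabs be * gabs (fun k => ak k ^ 2)
                       + taylor_const al * gabs (fun k => ak k ^ 3)).

Lemma Cfar_nonneg : 0 <= Cfar.
Proof.
  unfold Cfar. pose proof (Rabs_pos lead). pose proof (Rabs_pos be).
  pose proof (taylor_const_nonneg al).
  assert (0 <= gabs (fun k => ak k ^ 2)) by (apply gabs_nonneg; intro; apply pow_le, ak_nonneg).
  assert (0 <= gabs (fun k => ak k ^ 3)) by (apply gabs_nonneg; intro; apply pow_le, ak_nonneg).
  nra.
Qed.

Section FarPoint.

Variables (n : pt) (rho : R).
Hypothesis Hn : length n = d.
Hypothesis Hrho : normsq n = rho * rho.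
Hypothesis Hfar : rho0 <= rho.

Lemma rho_ge1 : 1 <= rho.
Proof. pose proof rho0_ge1. lra. Qed.

Lemma sqrt_normsq : sqrt (normsq n) = rho.
Proof. rewrite Hrho. apply sqrt_square. pose proof rho_ge1. lra. Qed.

Local Notation r := (normsq n).

Lemma shift_far k : In k supp -> Rabs (shift d n k) <= rho * ak k.
Proof.
  intros Hk. apply shift_bound; [exact (proj1 (Forall_forall _ _) Hlen k Hk) | | exact rho_ge1].
  rewrite sqrt_normsq. apply Rle_refl.
Qed.

Lemma Wq_far k : In k supp -> Rabs (Wq d n k) <= rho * ak k ^ 2.
Proof.
  intros Hk. apply Wq_bound; [exact (proj1 (Forall_forall _ _) Hlen k Hk) | | exact rho_ge1].
  rewrite sqrt_normsq. apply Rle_refl.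
Qed.

Definition trel (k : pt) : R := shift d n k / r.

Lemma trel_bound k : In k supp -> Rabs (trel k) <= ak k / rho /\ Rabs (trel k) <= 1/2.
Proof.
  intros Hk. pose proof rho_ge1. pose proof (shift_far k Hk).
  assert (Ht : Rabs (trel k) <= ak k / rho).
  { unfold trel. rewrite Hrho. unfold Rdiv.
    rewrite Rabs_mult, Rabs_inv, (Rabs_right (rho * rho)) by nra.
    apply Rmult_le_reg_r with (rho * rho); [nra |].
    replace (Rabs (shift d n k) * / (rho * rho) * (rho * rho)) with (Rabs (shift d n k))
      by (field; lra).
    replace (ak k * / rho * (rho * rho)) with (rho * ak k) by (field; lra). lra. }
  split; [exact Ht | pose proof (ak_over_rho k rho Hk Hfar); lra].
Qed.

Lemma omega_far k : In k supp -> omega (Z.of_nat m) (vsub n k) = / rho ^ m * P al (trel k).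
Proof.
  intros Hk. pose proof rho_ge1.
  destruct (trel_bound k Hk) as [_ Ht].
  assert (Ht' : 0 < 1 + trel k) by (unfold Rabs in Ht; destruct Rcase_abs; lra).
  assert (Hr : 0 < r) by (rewrite Hrho; nra).
  assert (Hv : normsq (vsub n k) = r * (1 + trel k)).
  { rewrite (normsq_vsub d n k Hn (proj1 (Forall_forall _ _) Hlen k Hk)).
    unfold trel, shift. field. lra. }
  rewrite omega_rpower by (rewrite Hv; apply Rmult_lt_0_compat; lra).
  rewrite Hv, <- Rpower_mult_distr by lra. unfold P, al.
  rewrite inv_sqrt_pow, sqrt_normsq by lra. reflexivity.
Qed.

(* Summing the quadratic Taylor polynomial against g: the moment identities
   leave only the coefficient lead and the lower-order term Wq. *)
Lemma quadratic_sum :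
  rsum supp (fun k => IZR (g k) * (1 + al * trel k + be * (trel k * trel k))) =
  lead / r + be / (r * r) * rsum supp (fun k => IZR (g k) * Wq d n k).
Proof.
  pose proof rho_ge1. assert (Hr : r <> 0) by (rewrite Hrho; nra).
  rewrite (rsum_ext _ _ (fun k => IZR (g k)
      + (al / r) * (-2 * (IZR (g k) * dot d n k) + IZR (g k) * normsq k)
      + (be / (r * r)) * (4 * (IZR (g k) * (dot d n k * dot d n k)) + IZR (g k) * Wq d n k))).
  2:{ intros k _. unfold trel, Wq, shift. field. exact Hr. }
  rewrite !rsum_plus, !rsum_scal, rsum_plus, rsum_plus, !rsum_scal.
  rewrite (moment0 g supp HA), (moment1 d g supp n HB), (moment_normsq d g supp Hd Hlen HC HD),
    (moment_dot2 d g supp Hd n HC HD Hn).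
  unfold lead. field. exact Hr.
Qed.

Lemma Wq_sum_bound :
  Rabs (rsum supp (fun k => IZR (g k) * Wq d n k)) <= rho * gabs (fun k => ak k ^ 2).
Proof.
  eapply Rle_trans; [apply rsum_abs |]. unfold gabs. rewrite <- rsum_scal.
  apply rsum_le. intros k Hk. rewrite Rabs_mult.
  pose proof (Wq_far k Hk). pose proof (Rabs_pos (IZR (g k))). nra.
Qed.

Definition taylor_rem (k : pt) : R :=
  P al (trel k) - 1 - al * trel k - be * (trel k * trel k).

Lemma remainder_sum_bound :
  Rabs (rsum supp (fun k => IZR (g k) * taylor_rem k))
  <= taylor_const al * gabs (fun k => ak k ^ 3) / rho ^ 3.
Proof.
  pose proof rho_ge1. assert (Hal : al <= 0) by (unfold al; pose proof (pos_INR m); lra).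
  replace (taylor_const al * gabs (fun k => ak k ^ 3) / rho ^ 3)
    with (rsum supp (fun k => Rabs (IZR (g k)) * (taylor_const al * (ak k / rho) ^ 3))).
  2:{ unfold gabs. rewrite <- rsum_scal. unfold Rdiv. rewrite Rmult_comm, <- rsum_scal.
      apply rsum_ext. intros k _. field. lra. }
  eapply Rle_trans; [apply rsum_abs |].
  apply rsum_le. intros k Hk. rewrite Rabs_mult.
  apply Rmult_le_compat_l; [apply Rabs_pos |].
  destruct (trel_bound k Hk) as [Ht1 Ht2].
  assert (HT := taylor al (trel k) Hal Ht2). fold be in HT. fold (taylor_rem k) in HT.
  assert (Hpow : Rabs (trel k) ^ 3 <= (ak k / rho) ^ 3)
    by (apply pow_incr; split; [apply Rabs_pos | exact Ht1]).
  pose proof (taylor_const_nonneg al). nra.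
Qed.

Lemma conv_far_expansion : conv g supp (Z.of_nat m) n =
  / rho ^ m * (lead / r + be / (r * r) * rsum supp (fun k => IZR (g k) * Wq d n k)
               + rsum supp (fun k => IZR (g k) * taylor_rem k)).
Proof.
  change (conv g supp (Z.of_nat m) n)
    with (rsum supp (fun k => IZR (g k) * omega (Z.of_nat m) (vsub n k))).
  rewrite <- quadratic_sum, <- rsum_plus, <- rsum_scal.
  apply rsum_ext. intros k Hk. rewrite omega_far by exact Hk. unfold taylor_rem. ring.
Qed.

Lemma expansion_bound :
  Rabs (lead / r + be / (r * r) * rsum supp (fun k => IZR (g k) * Wq d n k)
        + rsum supp (fun k => IZR (g k) * taylor_rem k))
  <= Rabs lead / rho ^ 2 + (Cfar - Rabs lead) / rho ^ 3.
Proof.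
  pose proof rho_ge1. assert (Hrr : 0 < rho * rho) by nra.
  assert (Hrrrr : 0 < rho * rho * (rho * rho)) by nra.
  assert (Hlead : Rabs (lead / r) = Rabs lead / rho ^ 2).
  { rewrite Hrho. unfold Rdiv. rewrite Rabs_mult, Rabs_inv, (Rabs_right (rho * rho)) by lra.
    simpl. now rewrite Rmult_1_r. }
  assert (HW : Rabs (be / (r * r) * rsum supp (fun k => IZR (g k) * Wq d n k))
               <= Rabs be * gabs (fun k => ak k ^ 2) / rho ^ 3).
  { rewrite Hrho. unfold Rdiv.
    rewrite !Rabs_mult, Rabs_inv, (Rabs_right (rho * rho * (rho * rho))) by lra.
    apply Rle_trans with (Rabs be * / (rho * rho * (rho * rho)) * (rho * gabs (fun k => ak k ^ 2))).
    - apply Rmult_le_compat_l; [| exact Wq_sum_bound].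
      apply Rmult_le_pos; [apply Rabs_pos | left; apply Rinv_0_lt_compat; lra].
    - right. simpl. field. lra. }
  pose proof remainder_sum_bound.
  eapply Rle_trans; [apply Rabs_triang |].
  eapply Rle_trans; [apply Rplus_le_compat_r, Rabs_triang |].
  unfold Cfar. unfold Rdiv in *. lra.
Qed.

Lemma conv_far : Rabs (conv g supp (Z.of_nat m) n) <= Cfar / rho ^ (S d).
Proof.
  pose proof rho_ge1. pose proof Cfar_nonneg.
  rewrite conv_far_expansion, Rabs_mult, Rabs_inv, (Rabs_right (rho ^ m))
    by (apply Rle_ge, pow_le; lra).
  eapply Rle_trans.
  { apply Rmult_le_compat_l; [left; apply Rinv_0_lt_compat, pow_lt; lra | apply expansion_bound]. }
  replace (/ rho ^ m * (Rabs lead / rho ^ 2 + (Cfar - Rabs lead) / rho ^ 3))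
    with (Rabs lead / rho ^ (m + 2) + (Cfar - Rabs lead) / rho ^ (m + 3))
    by (rewrite !pow_add; field; repeat split; try apply pow_nonzero; lra).
  replace (Cfar / rho ^ S d) with ((Rabs lead + (Cfar - Rabs lead)) / rho ^ S d) by (f_equal; ring).
  apply decay_combine; try lia; try lra.
  - apply Rabs_pos.
  - unfold Cfar. pose proof (Rabs_pos be). pose proof (taylor_const_nonneg al).
    assert (0 <= gabs (fun k => ak k ^ 2)) by (apply gabs_nonneg; intro; apply pow_le, ak_nonneg).
    assert (0 <= gabs (fun k => ak k ^ 3)) by (apply gabs_nonneg; intro; apply pow_le, ak_nonneg).
    nra.
  - destruct (Nat.eq_dec (m + 2) d) as [E | E]; [left | right; lia].
    rewrite lead_vanishes by exact E. apply Rabs_R0.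
Qed.

End FarPoint.

Lemma conv_near n : Rabs (conv g supp (Z.of_nat m) n) <= gabs (fun _ => 1).
Proof.
  change (conv g supp (Z.of_nat m) n)
    with (rsum supp (fun k => IZR (g k) * omega (Z.of_nat m) (vsub n k))).
  eapply Rle_trans; [apply rsum_abs |]. apply rsum_le. intros k _.
  rewrite Rabs_mult. destruct (omega_bounds m (vsub n k)).
  rewrite (Rabs_right (omega _ _)) by lra.
  apply Rmult_le_compat_l; [apply Rabs_pos | lra].
Qed.

Lemma conv_decay : exists C, 0 <= C /\ forall n, length n = d ->
  Rabs (conv g supp (Z.of_nat m) n) <= C / (1 + n1 n) ^ (S d).
Proof.
  assert (HG : 0 <= gabs (fun _ => 1)) by (apply gabs_nonneg; intros; lra).
  assert (Hd0 := pos_INR d). pose proof rho0_ge1. pose proof Cfar_nonneg.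
  assert (HV1 : 0 <= (1 + INR d * rho0) ^ (S d)) by (apply pow_le; nra).
  assert (HV2 : 0 <= (1 + INR d) ^ (S d)) by (apply pow_le; lra).
  exists (gabs (fun _ => 1) * (1 + INR d * rho0) ^ (S d) + Cfar * (1 + INR d) ^ (S d)).
  split; [nra |]. intros n Hn.
  remember (sqrt (normsq n)) as rho eqn:Erho.
  assert (Hrho : normsq n = rho * rho) by (subst; rewrite sqrt_sqrt; auto using normsq_nonneg).
  assert (Hl1 : n1 n <= INR d * rho) by (subst; apply n1_le_norm, Hn).
  assert (Hrho0 : 0 <= rho) by (subst; apply sqrt_pos).
  pose proof (n1_nonneg n).
  assert (Hu : 0 < / (1 + n1 n) ^ (S d)) by (apply Rinv_0_lt_compat, pow_lt; lra).
  unfold Rdiv. rewrite Rmult_plus_distr_r.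
  destruct (Rlt_le_dec rho rho0) as [Hnear | Hfar].
  - assert (gabs (fun _ => 1) <= gabs (fun _ => 1) * (1 + INR d * rho0) ^ (S d) / (1 + n1 n) ^ (S d)).
    { replace (gabs (fun _ => 1)) with (gabs (fun _ => 1) / 1 ^ (S d)) at 1 by (rewrite pow1; field).
      apply inv_pow_compare; [lra | lra | lra | nra]. }
    assert (0 <= Cfar * (1 + INR d) ^ (S d) * / (1 + n1 n) ^ (S d))
      by (apply Rmult_le_pos; [apply Rmult_le_pos |]; lra).
    pose proof (conv_near n). unfold Rdiv in *. lra.
  - assert (Cfar / rho ^ (S d) <= Cfar * (1 + INR d) ^ (S d) / (1 + n1 n) ^ (S d)).
    { apply inv_pow_compare; [lra | lra | lra | nra]. }
    assert (0 <= gabs (fun _ => 1) * (1 + INR d * rho0) ^ (S d) * / (1 + n1 n) ^ (S d))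
      by (apply Rmult_le_pos; [apply Rmult_le_pos |]; lra).
    pose proof (conv_far n rho Hn Hrho Hfar). unfold Rdiv in *. lra.
Qed.

End Decay.

Fixpoint zrange (M : nat) : list Z :=
  match M with
  | O => [0%Z]
  | S M' => Z.of_nat (S M') :: (- Z.of_nat (S M'))%Z :: zrange M'
  end.

Lemma zrange_in M x : (Z.abs x <= Z.of_nat M)%Z -> In x (zrange M).
Proof.
  induction M; intros H; simpl; [left; lia |].
  destruct (Z.eq_dec x (Z.of_nat (S M))) as [-> | H1]; [auto |].
  destruct (Z.eq_dec x (- Z.of_nat (S M))) as [-> | H2]; [auto |].
  right; right; apply IHM; lia.
Qed.

Fixpoint box (d M : nat) : list pt :=
  match d with
  | O => [nil]
  | S d' => flat_map (fun x => map (cons x) (box d' M)) (zrange M)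
  end.

Lemma box_in d M (n : pt) : length n = d ->
  (forall x, In x n -> (Z.abs x <= Z.of_nat M)%Z) -> In n (box d M).
Proof.
  revert d; induction n as [|x n IH]; intros d Hl H; simpl in Hl; subst; simpl; [auto |].
  apply in_flat_map. exists x; split.
  - apply zrange_in, H; left; auto.
  - apply in_map, IH; auto. intros; apply H; right; auto.
Qed.

Fixpoint coord_bound (L : list pt) : nat :=
  match L with
  | nil => O
  | n :: L' => (fold_right (fun x a => Z.to_nat (Z.abs x) + a) O n + coord_bound L')%nat
  end.

Lemma coord_bound_spec L n x : In n L -> In x n -> (Z.abs x <= Z.of_nat (coord_bound L))%Z.
Proof.
  induction L as [|n' L IH]; simpl; [tauto |].
  intros [-> | Hn] Hx; [| specialize (IH Hn Hx); lia].
  enough (Z.to_nat (Z.abs x) <= fold_right (fun x a => Z.to_nat (Z.abs x) + a) O n)%nat by lia.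
  clear IH. induction n as [|y n IHn]; simpl in *; [tauto |].
  destruct Hx as [-> | Hy]; [lia | specialize (IHn Hy); lia].
Qed.

(* Telescoping estimate for one term of a one-dimensional sum. *)
Lemma tail_term_le b y p : 1 <= b -> b <= y ->
  / (y + 1) ^ (S (S p)) <= / b ^ p * (/ y - / (y + 1)).
Proof.
  intros Hb Hy.
  replace (/ y - / (y + 1)) with (/ (y * (y + 1))) by (field; lra).
  rewrite <- Rinv_mult.
  assert (0 < b ^ p) by (apply pow_lt; lra).
  assert (b ^ p <= (y + 1) ^ p) by (apply pow_incr; lra).
  apply Rinv_le_contravar; [apply Rmult_lt_0_compat; nra |].
  simpl. nra.
Qed.

Lemma zrange_sum (b : R) (p M : nat) : 1 <= b ->
  rsum (zrange M) (fun x => / (b + Rabs (IZR x)) ^ (S (S p))) <= 3 / b ^ (S p).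
Proof.
  intro Hb.
  assert (Hbp : 0 < b ^ p) by (apply pow_lt; lra).
  assert (Key : rsum (zrange M) (fun x => / (b + Rabs (IZR x)) ^ (S (S p)))
                <= / b ^ (S (S p)) + 2 / b ^ p * (/ b - / (b + INR M))).
  { induction M as [|M IH].
    - simpl. rewrite Rabs_R0, !Rplus_0_r. unfold Rdiv. lra.
    - set (f := fun x => / (b + Rabs (IZR x)) ^ (S (S p))) in *.
      change (rsum (zrange (S M)) f)
        with (f (Z.of_nat (S M)) + (f (- Z.of_nat (S M))%Z + rsum (zrange M) f)).
      unfold f at 1 2. rewrite opp_IZR, Rabs_Ropp, <- INR_IZR_INZ.
      rewrite Rabs_right by (apply Rle_ge, pos_INR). rewrite S_INR.
      pose proof (pos_INR M).
      assert (Ht := tail_term_le b (b + INR M) p Hb ltac:(lra)).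
      rewrite Rplus_assoc in Ht. unfold Rdiv in *. lra. }
  eapply Rle_trans; [exact Key |].
  pose proof (pos_INR M).
  assert (0 < / (b + INR M)) by (apply Rinv_0_lt_compat; lra).
  assert (/ b ^ (S (S p)) <= / b ^ (S p)) by (apply inv_pow_antitone; [lra | lia]).
  replace (2 / b ^ p * (/ b - / (b + INR M))) with (2 / b ^ (S p) - 2 / b ^ p * / (b + INR M))
    by (simpl; field; repeat split; try apply pow_nonzero; lra).
  assert (0 <= 2 / b ^ p * / (b + INR M)) by (unfold Rdiv; apply Rmult_le_pos;
    [apply Rmult_le_pos; [lra | left; apply Rinv_0_lt_compat; lra] | lra]).
  unfold Rdiv in *. lra.
Qed.

Lemma box_sum (M d : nat) : forall (p : nat) (b : R), 1 <= b ->
  rsum (box d M) (fun n => / (b + n1 n) ^ (d + S p)) <= 3 ^ d / b ^ (S p).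
Proof.
  induction d as [|d IH]; intros p b Hb.
  - simpl. rewrite Rplus_0_r. unfold Rdiv. rewrite Rmult_1_l, Rplus_0_r. lra.
  - simpl box. rewrite rsum_flat_map.
    eapply Rle_trans.
    { apply rsum_le. intros x _. rewrite rsum_map.
      replace (S d + S p)%nat with (d + S (S p))%nat by lia.
      apply (rsum_le _ _ (fun n => / ((b + Rabs (IZR x)) + n1 n) ^ (d + S (S p)))).
      intros n _. simpl n1. right. do 2 f_equal. ring. }
    eapply Rle_trans.
    { apply rsum_le. intros x _. apply IH. pose proof (Rabs_pos (IZR x)); lra. }
    unfold Rdiv. rewrite rsum_scal.
    pose proof (zrange_sum b p M Hb). unfold Rdiv in *.
    assert (0 < 3 ^ d) by (apply pow_lt; lra).
    simpl (3 ^ S d). nra.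
Qed.

Lemma ell1_of_decay d (f : pt -> R) C : 0 <= C ->
  (forall n, length n = d -> Rabs (f n) <= C / (1 + n1 n) ^ (S d)) -> ell1 d f.
Proof.
  intros HC Hf. exists (C * 3 ^ d). intros L HN HL.
  change (rsum L (fun n => Rabs (f n)) <= C * 3 ^ d).
  rewrite Forall_forall in HL.
  assert (Hpos : forall n, 0 <= C / (1 + n1 n) ^ (S d)).
  { intro n. pose proof (n1_nonneg n). unfold Rdiv.
    apply Rmult_le_pos; [lra | left; apply Rinv_0_lt_compat, pow_lt; lra]. }
  apply Rle_trans with (rsum L (fun n => C / (1 + n1 n) ^ (S d))).
  { apply rsum_le. intros n Hn. apply Hf, HL, Hn. }
  apply Rle_trans with (rsum (box d (coord_bound L)) (fun n => C / (1 + n1 n) ^ (S d))).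
  { apply rsum_sub; auto. intros n Hn. apply box_in; auto.
    intros x Hx. apply (coord_bound_spec L n x); auto. }
  unfold Rdiv. rewrite rsum_scal. apply Rmult_le_compat_l; [exact HC |].
  assert (H := box_sum (coord_bound L) d 0 1 ltac:(lra)).
  rewrite Nat.add_1_r, pow1 in H. unfold Rdiv in H. lra.
Qed.

Theorem lemma2p9 (d : nat) (g : pt -> Z) (S : list pt) (s : Z) :
  (2 <= d)%nat ->
  is_support d g S ->
  condA g S -> condB d g S -> condC d g S -> condD d g S ->
  (Z.of_nat d - 2 <= s)%Z ->
  ell1 d (conv g S s).
Proof.
  intros Hd [_ [Hlen _]] HA HB HC HD Hs.
  destruct (Z_of_nat_complete s ltac:(lia)) as [m ->].
  destruct (conv_decay d g S m ltac:(lia) Hlen HA HB HC HD ltac:(lia)) as [C [HC0 Hdecay]].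
  exact (ell1_of_decay d _ C HC0 Hdecay).
Qed.
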